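(* For every $n\in\mathbb{N}_0$ and every $x\in\mathbb{R}^3$ with $r=|x|$, $$|\mathbf{X}^{l,\dagger}_n(x)|\le\tfrac12(n+1)\sqrt{\tfrac{(n+1+l)!}{(n+1-l)!}}\,r^n\quad(l=0,\ldots,n+1),\qquad |\mathbf{Y}^{m,\dagger}_n(x)|\le\tfrac12(n+1)\sqrt{\tfrac{(n+1+m)!}{(n+1-m)!}}\,r^n\quad(m=1,\ldots,n+1).$$
   Context: Quaternions $\mathbb{H}$ have basis $1,\mathbf{e}_1,\mathbf{e}_2,\mathbf{e}_3$ with the usual Hamilton multiplication; $|\mathbf{a}|$ is the Euclidean norm in $\mathbb{R}^4$. Reduced quaternions: $\mathcal{A}=\mathrm{span}_\mathbb{R}\{1,\mathbf{e}_1,\mathbf{e}_2\}$; $x=(x_0,x_1,x_2)\in\mathbb{R}^3$ is identified with $x_0+x_1\mathbf{e}_1+x_2\mathbf{e}_2$. $\overline{D}=\partial_{x_0}-\mathbf{e}_1\partial_{x_1}-\mathbf{e}_2\partial_{x_2}$. Spherical coordinates: $x_0=r\cos\theta_1$, $x_1=r\sin\theta_1\cos\theta_2$, $x_2=r\sin\theta_1\sin\theta_2$. $P^m_n(t)=(1-t^2)^{m/2}\frac{d^m}{dt^m}P_n(t)$ is the associated Legendre function ($P_n$ the Legendre polynomial); $T_k,U_k$ are Chebyshev polynomials of first and second kind. Spherical harmonics: $U^l_{n}=P^l_{n}(\cos\theta_1)T_l(\cos\theta_2)$, $V^m_{n}=P^m_{n}(\cos\theta_1)\sin\theta_2\,U_{m-1}(\cos\theta_2)$.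 Basis polynomials: $\mathbf{X}^{l,\dagger}_n:=\tfrac12\overline{D}\big(r^{n+1}U^l_{n+1}\big)$, $l=0,\ldots,n+1$, and $\mathbf{Y}^{m,\dagger}_n:=\tfrac12\overline{D}\big(r^{n+1}V^m_{n+1}\big)$, $m=1,\ldots,n+1$. *)

From Stdlib Require Import Reals Lra List Arith Factorial.
Open Scope R_scope.

(** Polynomials with real coefficients as coefficient lists (lowest degree first). *)
Definition rpoly := list R.

Fixpoint padd (p q : rpoly) : rpoly :=
  match p with
  | nil => q
  | cons a p' => match q with
                 | nil => p
                 | cons b q' => cons (a + b) (padd p' q')
                 end
  end.

Definition pscale (c : R) (p : rpoly) : rpoly := map (Rmult c) p.
Definition pmulX (p : rpoly) : rpoly := cons 0 p.
Definition peval (p : rpoly) (t : R) : R := fold_right (fun a acc => a + t * acc) 0 p.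

Fixpoint pderiv_aux (k : nat) (p : rpoly) : rpoly :=
  match p with
  | nil => nil
  | cons a p' => cons (INR k * a) (pderiv_aux (S k) p')
  end.
Definition pderiv (p : rpoly) : rpoly :=
  match p with nil => nil | cons _ p' => pderiv_aux 1 p' end.

(** Legendre polynomials via Bonnet's recurrence:
    (k+2) P_{k+2} = (2k+3) t P_{k+1} - (k+1) P_k ;  leg_pair n = (P_n, P_{n+1}) *)
Fixpoint leg_pair (n : nat) : rpoly * rpoly :=
  match n with
  | O => (cons 1 nil, cons 0 (cons 1 nil))
  | S k => let (p, q) := leg_pair k in
           (q, pscale (/ INR (k + 2))
                 (padd (pscale (INR (2 * k + 3)) (pmulX q)) (pscale (- INR (k + 1)) p)))
  end.
Definition legendre (n : nat) : rpoly := fst (leg_pair n).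

Definition assocLegendre (n m : nat) (t : R) : R :=
  (sqrt (1 - t ^ 2)) ^ m * peval (Nat.iter m pderiv (legendre n)) t.

Fixpoint cheb_pair (a0 a1 t : R) (k : nat) : R * R :=
  match k with
  | O => (a0, a1)
  | S k' => let (a, b) := cheb_pair a0 a1 t k' in (b, 2 * t * b - a)
  end.
Definition chebT (k : nat) (t : R) : R := fst (cheb_pair 1 t t k).
Definition chebU (k : nat) (t : R) : R := fst (cheb_pair 1 (2 * t) t k).

(** spherical coordinates of x = (x0,x1,x2):
    r = |x|, cos th1 = x0/r, sin th1 = rho/r, cos th2 = x1/rho, sin th2 = x2/rho,
    rho = sqrt(x1^2+x2^2).  (At r = 0 or rho = 0 the angles are undefined; the
    products below are then the continuous (polynomial) extensions.) *)
Definition rad (x0 x1 x2 : R) : R := sqrt (x0 ^ 2 + x1 ^ 2 + x2 ^ 2).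
Definition rho (x1 x2 : R) : R := sqrt (x1 ^ 2 + x2 ^ 2).
Definition cos_th1 (x0 x1 x2 : R) : R := x0 / rad x0 x1 x2.
Definition cos_th2 (x1 x2 : R) : R := x1 / rho x1 x2.
Definition sin_th2 (x1 x2 : R) : R := x2 / rho x1 x2.

Definition Usph (n l : nat) (x0 x1 x2 : R) : R :=
  assocLegendre n l (cos_th1 x0 x1 x2) * chebT l (cos_th2 x1 x2).
Definition Vsph (n m : nat) (x0 x1 x2 : R) : R :=
  assocLegendre n m (cos_th1 x0 x1 x2) * sin_th2 x1 x2 * chebU (m - 1) (cos_th2 x1 x2).

Definition solidU (n l : nat) (x0 x1 x2 : R) : R := rad x0 x1 x2 ^ n * Usph n l x0 x1 x2.
Definition solidV (n m : nat) (x0 x1 x2 : R) : R := rad x0 x1 x2 ^ n * Vsph n m x0 x1 x2.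

(** Quaternions as 4-tuples of coordinates w.r.t. 1, e1, e2, e3; Euclidean norm. *)
Definition quat : Type := (R * R * R * R)%type.
Definition qnorm (q : quat) : R :=
  match q with (a, b, c, d) => sqrt (a ^ 2 + b ^ 2 + c ^ 2 + d ^ 2) end.
Definition qscale (s : R) (q : quat) : quat :=
  match q with (a, b, c, d) => (s * a, s * b, s * c, s * d) end.

(** Dbar f = d0 f - e1 d1 f - e2 d2 f for a real valued f whose partial
    derivatives at the point are d0, d1, d2. *)
Definition Dbar_val (d0 d1 d2 : R) : quat := (d0, - d1, - d2, 0).

(** Write the harmonic as [r^N P(cos th1) A] with [P = P_N^l] and [A] either
    [T_l(cos th2)] or [sin th2 U_(l-1)(cos th2)]. Off the [x0]-axis its squared gradient is
    [r^(2N-2) (A^2 (N^2 P^2 + sin^2 th1 P'^2) + (1 - A^2) l^2 P^2 / sin^2 th1)], because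
    [(dA/dth2)^2 = l^2 (1 - A^2)]. Both quantities in brackets are at most
    [N^2 (N+l)!/(N-l)!]: by the differentiated Legendre equation they are controlled by
    three consecutive terms of [sum_j eps_j (N-j)!/(N+j)! P_N^j(t)^2], and this sum is [1]
    because its derivative telescopes to [0] and its value at [t = 1] is [P_N(1)^2].
    On the axis each partial derivative vanishes by symmetry, is computed from [r^N]
    ([l = 0]), or is by the mean value theorem a limit of off-axis ones.
    Finally [|Dbar f / 2| = |grad f| / 2]. *)

From Stdlib Require Import Reals Arith Factorial Lra Lia Psatz List ClassicalEpsilon.
Open Scope R_scope.

Local Notation dpl := derivable_pt_lim.

Lemma dpl_ext f g x l : (forall t, f t = g t) -> dpl f x l -> dpl g x l.
Proof.
  intros E H eps Heps. destruct (H eps Heps) as [d Hd]. exists d.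
  intros h h0 hd. rewrite <- !E. apply Hd; auto.
Qed.

Lemma dpl_eq f x l l' : dpl f x l -> l = l' -> dpl f x l'.
Proof. intros H ->; exact H. Qed.

Lemma dpl_const a x : dpl (fun _ => a) x 0.
Proof. exact (derivable_pt_lim_const a x). Qed.

Lemma dpl_id x : dpl (fun t => t) x 1.
Proof. exact (derivable_pt_lim_id x). Qed.

Lemma dpl_plus f g x a b : dpl f x a -> dpl g x b -> dpl (fun t => f t + g t) x (a + b).
Proof. intros; apply (derivable_pt_lim_plus f g); auto. Qed.

Lemma dpl_minus f g x a b : dpl f x a -> dpl g x b -> dpl (fun t => f t - g t) x (a - b).
Proof. intros; apply (derivable_pt_lim_minus f g); auto. Qed.

Lemma dpl_mult f g x a b :
  dpl f x a -> dpl g x b -> dpl (fun t => f t * g t) x (a * g x + f x * b).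
Proof. intros; apply (derivable_pt_lim_mult f g); auto. Qed.

Lemma dpl_scal c f x a : dpl f x a -> dpl (fun t => c * f t) x (c * a).
Proof.
  intros H. eapply dpl_eq; [exact (dpl_mult (fun _ => c) f x 0 a (dpl_const c x) H)|].
  cbv beta. ring.
Qed.

Lemma dpl_comp f g x a b : dpl g x b -> dpl f (g x) a -> dpl (fun t => f (g t)) x (a * b).
Proof. intros; apply (derivable_pt_lim_comp g f); auto. Qed.

Lemma dpl_pow f x a n : dpl f x a -> dpl (fun t => f t ^ n) x (INR n * f x ^ pred n * a).
Proof. intros H. apply (dpl_comp (fun y => y ^ n) f x); auto. apply derivable_pt_lim_pow. Qed.

Lemma dpl_sqrt f x a :
  0 < f x -> dpl f x a -> dpl (fun t => sqrt (f t)) x (a / (2 * sqrt (f x))).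
Proof.
  intros Hp H. eapply dpl_eq.
  - apply (dpl_comp sqrt f x (/ (2 * sqrt (f x))) a H). apply derivable_pt_lim_sqrt; auto.
  - unfold Rdiv; ring.
Qed.

Lemma dpl_div f g x a b : g x <> 0 -> dpl f x a -> dpl g x b ->
  dpl (fun t => f t / g t) x ((a * g x - f x * b) / g x ^ 2).
Proof.
  intros Hg Hf Hg'. eapply dpl_eq; [exact (derivable_pt_lim_div f g x a b Hf Hg' Hg)|].
  unfold Rsqr; field; auto.
Qed.

Lemma dpl_unique_ext f g x a b : (forall t, f t = g t) -> dpl f x a -> dpl g x b -> a = b.
Proof. intros E Hf Hg. apply (uniqueness_limite g x); auto. eapply dpl_ext; eauto. Qed.

Lemma dpl_zero_fun f x l : (forall t, f t = 0) -> dpl f x l -> l = 0.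
Proof. intros E H. apply (dpl_unique_ext f (fun _ => 0) x); auto using dpl_const. Qed.

Lemma dpl_even_at_0 g d : (forall t, g (- t) = g t) -> dpl g 0 d -> d = 0.
Proof.
  intros E H.
  assert (Hneg : dpl (fun t => g (- t)) 0 (d * -1)).
  { apply dpl_comp.
    - eapply dpl_eq; [apply (derivable_pt_lim_opp (fun t => t)); apply dpl_id | reflexivity].
    - rewrite Ropp_0. exact H. }
  enough (d * -1 = d) by lra.
  exact (dpl_unique_ext _ g 0 _ _ E Hneg H).
Qed.

Lemma peval_padd p q t : peval (padd p q) t = peval p t + peval q t.
Proof.
  revert q; induction p as [|a p IH]; intros [|b q]; simpl; try ring.
  rewrite IH. ring.
Qed.

Lemma peval_pscale c p t : peval (pscale c p) t = c * peval p t.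
Proof. induction p as [|a p IH]; unfold pscale in *; simpl in *; [|rewrite IH]; ring. Qed.

Lemma peval_pmulX p t : peval (pmulX p) t = t * peval p t.
Proof. simpl. ring. Qed.

Lemma peval_pderiv_aux k p t :
  peval (pderiv_aux k p) t = INR k * peval p t + t * peval (pderiv p) t.
Proof.
  revert k; induction p as [|a p IH]; intros k; simpl; [ring|].
  rewrite (IH (S k)), (IH 1%nat), S_INR. simpl. ring.
Qed.

Lemma peval_deriv p t : dpl (peval p) t (peval (pderiv p) t).
Proof.
  induction p as [|a p IH]; [exact (dpl_const 0 t)|].
  apply (dpl_ext (fun t => a + t * peval p t)); [reflexivity|].
  eapply dpl_eq; [apply dpl_plus; [apply dpl_const | apply dpl_mult; [apply dpl_id | apply IH]]|].
  simpl. rewrite peval_pderiv_aux. simpl. ring.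
Qed.

Lemma length_pderiv p : length (pderiv p) = pred (length p).
Proof.
  destruct p as [|a p]; simpl; auto.
  generalize 1%nat. induction p; intros; simpl; auto.
Qed.

Lemma length_iter_pderiv j p : length (Nat.iter j pderiv p) = (length p - j)%nat.
Proof. induction j; simpl; [lia|]. rewrite length_pderiv, IHj. lia. Qed.

Lemma length_padd p q : length (padd p q) = Nat.max (length p) (length q).
Proof. revert q; induction p; intros [|b q]; simpl; auto. Qed.

(** * Legendre polynomials *)

Lemma length_leg_pair n :
  (length (fst (leg_pair n)) <= n + 1 /\ length (snd (leg_pair n)) <= n + 2)%nat.
Proof.
  induction n; [simpl; lia|].
  cbn [leg_pair]. destruct (leg_pair n) as [p q]. cbn [fst snd] in *. split; [lia|].
  unfold pscale, pmulX. rewrite length_map, length_padd, !length_map. cbn [length]. lia.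
Qed.

Definition legendreD (N j : nat) (t : R) : R := peval (Nat.iter j pderiv (legendre N)) t.

Lemma legendreD_deriv N j t : dpl (legendreD N j) t (legendreD N (S j) t).
Proof. apply peval_deriv. Qed.

Lemma legendreD_high N j t : (N < j)%nat -> legendreD N j t = 0.
Proof.
  intros Hj. unfold legendreD.
  assert (H : length (Nat.iter j pderiv (legendre N)) = 0%nat).
  { rewrite length_iter_pderiv. unfold legendre. pose proof (length_leg_pair N). lia. }
  destruct (Nat.iter j pderiv (legendre N)); [reflexivity | discriminate].
Qed.

Lemma legendre_S k : legendre (S k) = snd (leg_pair k).
Proof. unfold legendre. cbn [leg_pair]. destruct (leg_pair k); reflexivity. Qed.

Lemma legendre_bonnet k t :
  INR (k + 2) * legendreD (S (S k)) 0 t =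
  INR (2 * k + 3) * t * legendreD (S k) 0 t - INR (k + 1) * legendreD k 0 t.
Proof.
  assert (Hk : 0 < INR (k + 2)) by (apply lt_0_INR; lia).
  unfold legendreD; simpl Nat.iter.
  rewrite !legendre_S. unfold legendre. cbn [leg_pair]. destruct (leg_pair k) as [p q].
  cbn [fst snd]. rewrite peval_pscale, peval_padd, !peval_pscale, peval_pmulX.
  field. lra.
Qed.

Lemma legendre_bonnet_deriv k t :
  INR (k + 2) * legendreD (S (S k)) 1 t =
  INR (2 * k + 3) * (legendreD (S k) 0 t + t * legendreD (S k) 1 t) - INR (k + 1) * legendreD k 1 t.
Proof.
  apply (dpl_unique_ext (fun t => INR (k + 2) * legendreD (S (S k)) 0 t)
    (fun t => INR (2 * k + 3) * t * legendreD (S k) 0 t - INR (k + 1) * legendreD k 0 t) t).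
  - intros; apply legendre_bonnet.
  - apply dpl_scal, legendreD_deriv.
  - eapply dpl_eq.
    + apply dpl_minus; [apply dpl_mult; [apply dpl_scal, dpl_id | apply legendreD_deriv] |].
      apply dpl_scal, legendreD_deriv.
    + ring.
Qed.

Lemma legendre_at_pm1 N : legendreD N 0 1 = 1 /\ legendreD N 0 (-1) = (-1) ^ N.
Proof.
  enough (H : forall k, (legendreD k 0 1 = 1 /\ legendreD k 0 (-1) = (-1) ^ k) /\
                  (legendreD (S k) 0 1 = 1 /\ legendreD (S k) 0 (-1) = (-1) ^ S k)) by apply H.
  induction k as [|k [[H1 H2] [H3 H4]]]; [unfold legendreD, legendre; simpl; lra|].
  split; [auto|].
  pose proof (legendre_bonnet k 1) as R1. pose proof (legendre_bonnet k (-1)) as R2.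
  rewrite H1, H3 in R1. rewrite H2, H4 in R2. simpl pow in *.
  rewrite !plus_INR, mult_INR in *.
  replace (INR 1) with 1 in * by reflexivity.
  replace (INR 2) with 2 in * by (simpl; ring). replace (INR 3) with 3 in * by (simpl; ring).
  pose proof (pos_INR k). split; nra.
Qed.

Lemma legendre_deriv_recurrences n t :
  legendreD (S n) 1 t - t * legendreD n 1 t = INR (S n) * legendreD n 0 t /\
  t * legendreD (S n) 1 t - legendreD n 1 t = INR (S n) * legendreD (S n) 0 t.
Proof.
  induction n as [|n [Ha Hb]]; [unfold legendreD, legendre; simpl; split; ring|].
  pose proof (legendre_bonnet_deriv n t) as D. pose proof (legendre_bonnet n t) as R.
  replace (INR (S (S n))) with (INR (n + 2)) by (f_equal; lia).
  rewrite !S_INR in *. rewrite !plus_INR, mult_INR in *.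
  replace (INR 1) with 1 in * by reflexivity.
  replace (INR 2) with 2 in * by (simpl; ring). replace (INR 3) with 3 in * by (simpl; ring).
  assert (Hk : 0 < INR n + 2) by (pose proof (pos_INR n); lra).
  set (k := INR n) in *.
  set (P0 := legendreD n 0 t) in *. set (P1 := legendreD (S n) 0 t) in *.
  set (P2 := legendreD (S (S n)) 0 t) in *. set (D0 := legendreD n 1 t) in *.
  set (D1 := legendreD (S n) 1 t) in *. set (D2 := legendreD (S (S n)) 1 t) in *.
  assert (HD0 : D0 = t * D1 - (k + 1) * P1) by lra.
  split; apply (Rmult_eq_reg_l (k + 2)); try lra.
  - transitivity ((k + 2) * D2 - (k + 2) * t * D1); [ring|].
    rewrite D, HD0. ring.
  - transitivity (t * ((k + 2) * D2) - (k + 2) * D1); [ring|].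
    replace ((k + 2) * ((k + 1 + 1) * P2)) with ((k + 2) * ((k + 2) * P2)) by ring.
    rewrite D, R, HD0.
    rewrite HD0 in Ha.
    assert ((t * t - 1) * D1 = (k + 1) * (t * P1 - P0)) by nra.
    nra.
Qed.

Lemma legendre_ode N t :
  (1 - t ^ 2) * legendreD N 2 t - 2 * t * legendreD N 1 t
  + INR N * (INR N + 1) * legendreD N 0 t = 0.
Proof.
  destruct N as [|n]; [unfold legendreD, legendre; simpl; ring|].
  assert (Da : legendreD (S n) 2 t - (legendreD n 1 t + t * legendreD n 2 t)
               = INR (S n) * legendreD n 1 t).
  { apply (dpl_unique_ext (fun t => legendreD (S n) 1 t - t * legendreD n 1 t)
                          (fun t => INR (S n) * legendreD n 0 t) t).
    - intros; apply legendre_deriv_recurrences.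
    - eapply dpl_eq; [apply dpl_minus; [|apply dpl_mult; [apply dpl_id|]]; apply legendreD_deriv|].
      cbv beta. ring.
    - apply dpl_scal, legendreD_deriv. }
  assert (Db : legendreD (S n) 1 t + t * legendreD (S n) 2 t - legendreD n 2 t
               = INR (S n) * legendreD (S n) 1 t).
  { apply (dpl_unique_ext (fun t => t * legendreD (S n) 1 t - legendreD n 1 t)
                          (fun t => INR (S n) * legendreD (S n) 0 t) t).
    - intros; apply legendre_deriv_recurrences.
    - eapply dpl_eq; [apply dpl_minus; [apply dpl_mult; [apply dpl_id|]|]; apply legendreD_deriv|].
      cbv beta. ring.
    - apply dpl_scal, legendreD_deriv. }
  destruct (legendre_deriv_recurrences n t) as [Ha Hb].
  rewrite S_INR in *.
  set (k := INR n) in *.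
  set (P0 := legendreD n 0 t) in *. set (P1 := legendreD (S n) 0 t) in *.
  set (D0 := legendreD n 1 t) in *. set (D1 := legendreD (S n) 1 t) in *.
  set (E0 := legendreD n 2 t) in *. set (E1 := legendreD (S n) 2 t) in *.
  replace E0 with (D1 + t * E1 - (k + 1) * D1) in Da by lra.
  replace D0 with (t * D1 - (k + 1) * P1) in Da by lra.
  nra.
Qed.

Lemma legendre_ode_deriv N j t :
  (1 - t ^ 2) * legendreD N (S (S j)) t - 2 * (INR j + 1) * t * legendreD N (S j) t
  + (INR N - INR j) * (INR N + INR j + 1) * legendreD N j t = 0.
Proof.
  revert t; induction j as [|j IH]; intros t.
  - pose proof (legendre_ode N t). simpl INR. lra.
  - assert (D : dpl (fun t => (1 - t ^ 2) * legendreD N (S (S j)) t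
                  - 2 * (INR j + 1) * t * legendreD N (S j) t
                  + (INR N - INR j) * (INR N + INR j + 1) * legendreD N j t) t
      ((1 - t ^ 2) * legendreD N (S (S (S j))) t + (- 2 * t) * legendreD N (S (S j)) t
        - 2 * (INR j + 1) * (legendreD N (S j) t + t * legendreD N (S (S j)) t)
        + (INR N - INR j) * (INR N + INR j + 1) * legendreD N (S j) t)).
    { eapply dpl_eq.
      - apply dpl_plus; [apply dpl_minus|].
        + apply dpl_mult; [apply dpl_minus; [apply dpl_const | apply dpl_pow, dpl_id]
                          | apply legendreD_deriv].
        + apply dpl_mult; [apply dpl_scal, dpl_id | apply legendreD_deriv].
        + apply dpl_scal, legendreD_deriv.
      - simpl. ring. }
    pose proof (dpl_zero_fun _ t _ IH D). rewrite S_INR. nra.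
Qed.

(** * Associated Legendre functions *)

Definition assoc_weight (N j : nat) : R := INR (fact (N - j)) / INR (fact (N + j)).

(* On [[-1, 1]], [assoc_sq N j t = (N-j)!/(N+j)! * P_N^j(t)^2]. *)
Definition assoc_sq (N j : nat) (t : R) : R :=
  assoc_weight N j * (1 - t ^ 2) ^ j * legendreD N j t ^ 2.
Definition neumann (j : nat) : R := match j with O => 1 | _ => 2 end.

Lemma INR_fact_pos k : 0 < INR (fact k).
Proof. apply lt_0_INR, lt_O_fact. Qed.

Lemma assoc_weight_pos N j : 0 < assoc_weight N j.
Proof. apply Rdiv_lt_0_compat; apply INR_fact_pos. Qed.

Lemma assoc_weight_0 N : assoc_weight N 0 = 1.
Proof.
  unfold assoc_weight. rewrite Nat.sub_0_r, Nat.add_0_r.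
  pose proof (INR_fact_pos N). field. lra.
Qed.

Lemma assoc_weight_S N j : (S j <= N)%nat ->
  assoc_weight N j = (INR N - INR j) * (INR N + INR j + 1) * assoc_weight N (S j).
Proof.
  intros H. unfold assoc_weight.
  replace (N - j)%nat with (S (N - S j)) by lia.
  replace (N + S j)%nat with (S (N + j)) by lia.
  rewrite !fact_simpl, !mult_INR, S_INR, minus_INR, S_INR, S_INR, plus_INR by lia.
  pose proof (INR_fact_pos (N - S j)). pose proof (INR_fact_pos (N + j)).
  pose proof (pos_INR N). pose proof (pos_INR j).
  field. lra.
Qed.

Lemma assoc_sq_nonneg N j t : -1 <= t <= 1 -> 0 <= assoc_sq N j t.
Proof.
  intros Ht. pose proof (assoc_weight_pos N j).
  apply Rmult_le_pos; [apply Rmult_le_pos; [lra | apply pow_le; nra] | apply pow2_ge_0].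
Qed.

Section SumOfSquares.

Variable N : nat.

Let cross (j : nat) (t : R) : R :=
  assoc_weight N j * (1 - t ^ 2) ^ j * legendreD N j t * legendreD N (S j) t.

Let partial_sum (k : nat) (t : R) : R :=
  sum_f_R0 (fun j => neumann j * assoc_sq N j t) k.

(* The derivative of the [(k+1)]-st term is [2 (cross (k+1) - cross k)] by the
   differentiated Legendre equation, so the partial sums telescope. *)
Lemma partial_sum_deriv k t : (k <= N)%nat -> dpl (partial_sum k) t (2 * cross k t).
Proof.
  induction k as [|k IH]; intros Hk.
  - apply (dpl_ext (fun t => assoc_weight N 0 * legendreD N 0 t ^ 2));
      [intros; unfold partial_sum, assoc_sq; simpl; ring|].
    eapply dpl_eq; [apply dpl_scal, dpl_pow, legendreD_deriv|]. unfold cross. simpl. ring.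
  - apply (dpl_ext (fun t => partial_sum k t
             + 2 * assoc_weight N (S k) * ((1 - t ^ 2) ^ S k * legendreD N (S k) t ^ 2)));
      [intros; unfold partial_sum, assoc_sq; simpl; ring|].
    eapply dpl_eq.
    + apply dpl_plus; [apply IH; lia|]. apply dpl_scal, dpl_mult.
      * apply dpl_pow, dpl_minus; [apply dpl_const | apply dpl_pow, dpl_id].
      * apply dpl_pow, legendreD_deriv.
    + pose proof (legendre_ode_deriv N k t) as Hode.
      unfold cross. rewrite (assoc_weight_S N k Hk).
      cbv beta. simpl pred. rewrite S_INR. simpl pow.
      simpl pow in Hode. simpl INR.
      set (p := (1 - t * (t * 1)) ^ k).
      apply Rminus_diag_uniq.
      transitivity (2 * assoc_weight N (S k) * p * legendreD N (S k) t *
        ((1 - t * (t * 1)) * legendreD N (S (S k)) t - 2 * (INR k + 1) * t * legendreD N (S k) t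
         + (INR N - INR k) * (INR N + INR k + 1) * legendreD N k t)); [ring|].
      rewrite Hode. ring.
Qed.

Lemma partial_sum_at_1 k : partial_sum k 1 = 1.
Proof.
  induction k as [|k IH]; unfold partial_sum in *; simpl sum_f_R0.
  - unfold assoc_sq. rewrite assoc_weight_0, (proj1 (legendre_at_pm1 N)). simpl. ring.
  - rewrite IH. unfold assoc_sq. simpl. ring.
Qed.

Lemma partial_sum_const t : partial_sum N t = 1.
Proof.
  rewrite <- (partial_sum_at_1 N).
  assert (D : forall c, dpl (partial_sum N) c 0).
  { intros c. eapply dpl_eq; [apply partial_sum_deriv; lia|].
    unfold cross. rewrite (legendreD_high N (S N)) by lia. ring. }
  destruct (Rtotal_order t 1) as [H|[H|H]].
  - destruct (MVT_cor2 (partial_sum N) (fun _ => 0) t 1 H (fun c _ => D c)) as [c [E _]]. lra.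
  - subst; auto.
  - destruct (MVT_cor2 (partial_sum N) (fun _ => 0) 1 t H (fun c _ => D c)) as [c [E _]]. lra.
Qed.

Lemma partial_sum_beyond k t : (N <= k)%nat -> partial_sum k t = 1.
Proof.
  induction 1 as [|k Hk IH]; [apply partial_sum_const|].
  unfold partial_sum in *; simpl. rewrite IH. unfold assoc_sq.
  rewrite legendreD_high by lia. ring.
Qed.

Lemma sum_f_R0_three (f : nat -> R) a K : (forall j, 0 <= f j) -> (a + 2 <= K)%nat ->
  f a + f (S a) + f (S (S a)) <= sum_f_R0 f K.
Proof.
  intros Hf HK. induction K as [|K IH]; [lia|].
  destruct (Nat.eq_dec (a + 2) (S K)) as [E|E].
  - replace K with (S a) by lia. simpl.
    assert (0 <= sum_f_R0 f a - f a).
    { destruct a; simpl; [lra|]. pose proof (cond_pos_sum f a Hf). lra. }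
    pose proof (Hf (S (S a))). lra.
  - simpl. pose proof (Hf (S K)). pose proof (IH ltac:(lia)). lra.
Qed.

Lemma assoc_sq_three k t : -1 <= t <= 1 ->
  assoc_sq N k t + 2 * assoc_sq N (S k) t + 2 * assoc_sq N (S (S k)) t <= 1.
Proof.
  intros Ht. rewrite <- (partial_sum_beyond (k + 2 + N) t) by lia.
  eapply Rle_trans; [|apply (sum_f_R0_three (fun j => neumann j * assoc_sq N j t) k)].
  - pose proof (assoc_sq_nonneg N k t Ht).
    assert (1 <= neumann k) by (destruct k; simpl; lra). simpl neumann. nra.
  - intros j. pose proof (assoc_sq_nonneg N j t Ht). destruct j; simpl; lra.
  - lia.
Qed.

End SumOfSquares.

Definition assocLegendreD (N l : nat) (c : R) : R :=
  sqrt (1 - c ^ 2) ^ l * (legendreD N (S l) c - INR l * c * legendreD N l c / (1 - c ^ 2)).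

Lemma sqrt_1_minus_sq_pow c j : -1 <= c <= 1 -> (sqrt (1 - c ^ 2) ^ j) ^ 2 = (1 - c ^ 2) ^ j.
Proof. intros Hc. rewrite <- pow_mult, Nat.mul_comm, pow_mult, pow2_sqrt by nra. reflexivity. Qed.

Lemma assocLegendre_deriv N l c : -1 < c < 1 -> dpl (assocLegendre N l) c (assocLegendreD N l c).
Proof.
  intros Hc.
  assert (Hp : 0 < 1 - c ^ 2) by nra.
  assert (HS : 0 < sqrt (1 - c ^ 2)) by (apply sqrt_lt_R0; auto).
  assert (HS2 : sqrt (1 - c ^ 2) ^ 2 = 1 - c ^ 2) by (rewrite pow2_sqrt; lra).
  eapply dpl_eq.
  - apply dpl_mult; [apply dpl_pow, dpl_sqrt; auto|].
    + apply dpl_minus; [apply dpl_const | apply dpl_pow, dpl_id].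
    + apply (legendreD_deriv N l).
  - unfold assocLegendreD, legendreD. cbv beta. simpl Nat.iter.
    set (s := sqrt (1 - c ^ 2)) in *.
    destruct l as [|k]; simpl pred; [simpl; field; lra|].
    rewrite S_INR. change (s ^ S k) with (s * s ^ k). simpl INR.
    rewrite <- HS2. field. lra.
Qed.

Lemma assocLegendre_sq N l c : -1 <= c <= 1 ->
  assocLegendre N l c ^ 2 = (1 - c ^ 2) ^ l * legendreD N l c ^ 2.
Proof. intros Hc. unfold assocLegendre. rewrite Rpow_mult_distr, sqrt_1_minus_sq_pow; auto. Qed.

Lemma assocLegendreD_sq N k c : -1 < c < 1 ->
  (1 - c ^ 2) * assocLegendreD N (S k) c ^ 2 =
  (1 - c ^ 2) ^ k * ((1 - c ^ 2) * legendreD N (S (S k)) c - INR (S k) * c * legendreD N (S k) c) ^ 2.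
Proof.
  intros Hc. assert (0 < 1 - c ^ 2) by nra.
  unfold assocLegendreD. rewrite Rpow_mult_distr, sqrt_1_minus_sq_pow by lra.
  simpl pow. field. lra.
Qed.

(* Holds also for [j = N], where [P_N^(N+1) = 0] while the weight recurrence fails. *)
Lemma assoc_weight_step N j t : -1 <= t <= 1 ->
  assoc_weight N j * (1 - t ^ 2) ^ S j * legendreD N (S j) t ^ 2
  <= INR N * (INR N + 1) * assoc_sq N (S j) t.
Proof.
  intros Ht. unfold assoc_sq.
  destruct (le_lt_dec (S j) N) as [Hj|Hj].
  - rewrite (assoc_weight_S N j Hj).
    assert (INR (S j) <= INR N) by (apply le_INR; auto). rewrite S_INR in *.
    pose proof (pos_INR j).
    pose proof (assoc_sq_nonneg N (S j) t Ht) as Hsq. unfold assoc_sq in Hsq.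
    assert ((INR N - INR j) * (INR N + INR j + 1) <= INR N * (INR N + 1)) by nra.
    assert (0 <= (INR N - INR j) * (INR N + INR j + 1)) by nra.
    nra.
  - rewrite legendreD_high by lia. right. ring.
Qed.

Lemma weighted_sum_bound n w0 w1 w2 E : 1 <= n -> 0 <= w1 -> 0 <= w2 ->
  w0 + 2 * w1 + 2 * w2 <= 1 -> E <= n * (n + 1) / 2 * (w0 + w2) -> n ^ 2 * w1 + E <= n ^ 2.
Proof. intros. nra. Qed.

Lemma half_sum_sq_le u w : ((u + w) / 2) ^ 2 <= (u ^ 2 + w ^ 2) / 2 /\
                           ((u - w) / 2) ^ 2 <= (u ^ 2 + w ^ 2) / 2.
Proof. pose proof (pow2_ge_0 (u - w)); pose proof (pow2_ge_0 (u + w)); split; nra. Qed.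

Lemma assoc_outer_terms_bound N k c : (S k <= N)%nat -> -1 <= c <= 1 ->
  let s := 1 - c ^ 2 in
  let a := (INR N - INR k) * (INR N + INR k + 1) in
  assoc_weight N (S k) * s ^ k * (((s * legendreD N (S (S k)) c) ^ 2 + (a * legendreD N k c) ^ 2) / 2)
  <= INR N * (INR N + 1) / 2 * (assoc_sq N k c + assoc_sq N (S (S k)) c).
Proof.
  intros Hk Hc s a.
  pose proof (assoc_weight_step N (S k) c Hc) as Hstep.
  pose proof (assoc_weight_S N k Hk) as Hv.
  assert (Ha : 0 <= a <= INR N * (INR N + 1)).
  { assert (INR (S k) <= INR N) by (apply le_INR; auto). rewrite S_INR in *.
    pose proof (pos_INR k). unfold a; split; nra. }
  pose proof (assoc_sq_nonneg N k c Hc) as H0.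
  unfold assoc_sq in *. fold s in Hstep, H0 |- *. rewrite Hv in H0 |- *. fold a in H0 |- *.
  set (v := assoc_weight N (S k)) in *.
  set (A0 := legendreD N k c) in *. set (A2 := legendreD N (S (S k)) c) in *.
  assert (HW2 : v * s ^ k * (s * A2) ^ 2 <= INR N * (INR N + 1) * (assoc_weight N (S (S k)) * s ^ S (S k) * A2 ^ 2)).
  { replace (v * s ^ k * (s * A2) ^ 2) with (v * s ^ S (S k) * A2 ^ 2) by (simpl; ring).
    exact Hstep. }
  assert (HW0 : v * s ^ k * (a * A0) ^ 2 <= INR N * (INR N + 1) * (a * v * s ^ k * A0 ^ 2)).
  { replace (v * s ^ k * (a * A0) ^ 2) with (a * (a * v * s ^ k * A0 ^ 2)) by ring.
    apply Rmult_le_compat_r; [assumption | apply Ha]. }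
  lra.
Qed.

(* By the differentiated Legendre equation both quantities are controlled by
   [assoc_sq] at [k], [k + 1] and [k + 2], whose sum with Neumann factors is at most one. *)
Lemma assocLegendre_bound_S N k c : (S k <= N)%nat -> -1 < c < 1 ->
  let v := assoc_weight N (S k) in
  v * (INR N ^ 2 * assocLegendre N (S k) c ^ 2 + (1 - c ^ 2) * assocLegendreD N (S k) c ^ 2)
    <= INR N ^ 2 /\
  v * (INR (S k) ^ 2 * assocLegendre N (S k) c ^ 2 / (1 - c ^ 2)) <= INR N ^ 2.
Proof.
  intros Hk Hc v.
  assert (Hc' : -1 <= c <= 1) by lra.
  assert (Hs : 0 < 1 - c ^ 2) by nra.
  rewrite assocLegendreD_sq, assocLegendre_sq by auto.
  pose proof (legendre_ode_deriv N k c) as Hode.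
  pose proof (assoc_outer_terms_bound N k c Hk Hc') as HE. cbv zeta in HE.
  pose proof (assoc_sq_three N k c Hc') as Hthree.
  pose proof (assoc_sq_nonneg N k c Hc'). pose proof (assoc_sq_nonneg N (S k) c Hc').
  pose proof (assoc_sq_nonneg N (S (S k)) c Hc').
  assert (HN : INR (S k) <= INR N) by (apply le_INR; auto).
  assert (Hk0 := pos_INR k). rewrite S_INR in *.
  unfold assoc_sq in *. fold v in HE |- *.
  set (s := 1 - c ^ 2) in *.
  set (a := (INR N - INR k) * (INR N + INR k + 1)) in *.
  set (A0 := legendreD N k c) in *. set (A1 := legendreD N (S k) c) in *.
  set (A2 := legendreD N (S (S k)) c) in *.
  assert (Hv0 : 0 < v) by apply assoc_weight_pos.
  assert (Hsk : 0 <= s ^ k) by (apply pow_le; lra).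
  assert (Hlc : (INR k + 1) * c * A1 = (s * A2 + a * A0) / 2) by lra.
  set (w0 := assoc_weight N k * s ^ k * A0 ^ 2) in *.
  set (w2 := assoc_weight N (S (S k)) * s ^ S (S k) * A2 ^ 2) in *.
  destruct (half_sum_sq_le (s * A2) (a * A0)) as [Hplus Hminus].
  assert (HN1 : 1 <= INR N) by lra.
  split.
  - replace (v * (INR N ^ 2 * (s ^ S k * A1 ^ 2) + s ^ k * (s * A2 - (INR k + 1) * c * A1) ^ 2))
      with (INR N ^ 2 * (v * s ^ S k * A1 ^ 2) + v * s ^ k * ((s * A2 - a * A0) / 2) ^ 2)
      by (rewrite Hlc; simpl; field).
    apply weighted_sum_bound with (w0 := w0) (w2 := w2); auto.
    eapply Rle_trans; [|exact HE]. apply Rmult_le_compat_l; [nra | exact Hminus].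
  - replace (v * ((INR k + 1) ^ 2 * (s ^ S k * A1 ^ 2) / s))
      with ((INR k + 1) ^ 2 * (v * s ^ S k * A1 ^ 2) + v * s ^ k * ((s * A2 + a * A0) / 2) ^ 2).
    2:{ rewrite <- Hlc. unfold s. simpl. field. nra. }
    apply Rle_trans with (INR N ^ 2 * (v * s ^ S k * A1 ^ 2) + v * s ^ k * ((s * A2 + a * A0) / 2) ^ 2).
    + apply Rplus_le_compat_r, Rmult_le_compat_r; [assumption | nra].
    + apply weighted_sum_bound with (w0 := w0) (w2 := w2); auto.
      eapply Rle_trans; [|exact HE]. apply Rmult_le_compat_l; [nra | exact Hplus].
Qed.

Lemma assocLegendre_bound_0 N c : (1 <= N)%nat -> -1 < c < 1 ->
  INR N ^ 2 * assocLegendre N 0 c ^ 2 + (1 - c ^ 2) * assocLegendreD N 0 c ^ 2 <= INR N ^ 2.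
Proof.
  intros HN Hc. assert (Hc' : -1 <= c <= 1) by lra.
  pose proof (assoc_weight_step N 0 c Hc') as Hstep.
  pose proof (assoc_sq_three N 0 c Hc') as Hthree.
  pose proof (assoc_sq_nonneg N 1 c Hc'). pose proof (assoc_sq_nonneg N 2 c Hc').
  assert (HN1 : 1 <= INR N) by (apply (le_INR 1); auto).
  replace (assocLegendre N 0 c) with (legendreD N 0 c) by (unfold assocLegendre, legendreD; simpl; ring).
  replace (assocLegendreD N 0 c) with (legendreD N 1 c) by (unfold assocLegendreD; simpl; field; nra).
  unfold assoc_sq in Hthree. rewrite assoc_weight_0 in *. fold (assoc_sq N 1 c) in Hthree.
  fold (assoc_sq N 2 c) in Hthree.
  replace (1 * (1 - c ^ 2) ^ 1 * legendreD N 1 c ^ 2) with ((1 - c ^ 2) * legendreD N 1 c ^ 2)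
    in Hstep by ring.
  replace (1 * (1 - c ^ 2) ^ 0 * legendreD N 0 c ^ 2) with (legendreD N 0 c ^ 2) in Hthree by ring.
  assert (INR N * (INR N + 1) * assoc_sq N 1 c <= 2 * INR N ^ 2 * assoc_sq N 1 c)
    by (apply Rmult_le_compat_r; [assumption | nra]).
  nra.
Qed.

Lemma assocLegendre_bound N l c : (1 <= N)%nat -> (l <= N)%nat -> -1 < c < 1 ->
  let M := INR (fact (N + l)) / INR (fact (N - l)) in
  INR N ^ 2 * assocLegendre N l c ^ 2 + (1 - c ^ 2) * assocLegendreD N l c ^ 2 <= INR N ^ 2 * M /\
  INR l ^ 2 * assocLegendre N l c ^ 2 / (1 - c ^ 2) <= INR N ^ 2 * M.
Proof.
  intros HN Hl Hc M.
  assert (HM : M = / assoc_weight N l).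
  { unfold M, assoc_weight. pose proof (INR_fact_pos (N + l)). pose proof (INR_fact_pos (N - l)).
    field. lra. }
  pose proof (assoc_weight_pos N l) as Hv.
  destruct l as [|k].
  - rewrite HM, assoc_weight_0, Rinv_1, Rmult_1_r. split; [now apply assocLegendre_bound_0|].
    simpl INR. replace (0 ^ 2 * assocLegendre N 0 c ^ 2 / (1 - c ^ 2)) with 0 by (field; nra).
    apply pow2_ge_0.
  - destruct (assocLegendre_bound_S N k c Hl Hc) as [B1 B2].
    rewrite HM. split; apply (Rmult_le_reg_l (assoc_weight N (S k))); auto;
      replace (assoc_weight N (S k) * (INR N ^ 2 * / assoc_weight N (S k))) with (INR N ^ 2)
        by (field; lra); assumption.
Qed.

(** * Chebyshev polynomials *)

Lemma cheb_pair_SS a0 a1 t k :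
  fst (cheb_pair a0 a1 t (S (S k))) =
  2 * t * fst (cheb_pair a0 a1 t (S k)) - fst (cheb_pair a0 a1 t k).
Proof. simpl. destruct (cheb_pair a0 a1 t k); reflexivity. Qed.

Lemma chebT_0 u : chebT 0 u = 1. Proof. reflexivity. Qed.
Lemma chebT_1 u : chebT 1 u = u. Proof. reflexivity. Qed.
Lemma chebT_SS k u : chebT (S (S k)) u = 2 * u * chebT (S k) u - chebT k u.
Proof. apply cheb_pair_SS. Qed.
Lemma chebU_0 u : chebU 0 u = 1. Proof. reflexivity. Qed.
Lemma chebU_1 u : chebU 1 u = 2 * u. Proof. reflexivity. Qed.
Lemma chebU_SS k u : chebU (S (S k)) u = 2 * u * chebU (S k) u - chebU k u.
Proof. apply cheb_pair_SS. Qed.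

Lemma three_term_zero (a : nat -> R) u : a 0%nat = 0 -> a 1%nat = 0 ->
  (forall k, a (S (S k)) = 2 * u * a (S k) - a k) -> forall k, a k = 0.
Proof.
  intros H0 H1 HS. enough (H : forall k, a k = 0 /\ a (S k) = 0) by apply H.
  induction k as [|k [IH1 IH2]]; auto. split; auto. rewrite HS, IH1, IH2. ring.
Qed.

Lemma chebT_S_chebU k u : chebT (S k) u = chebU (S k) u - u * chebU k u.
Proof.
  apply Rminus_diag_uniq.
  rewrite <- (three_term_zero (fun k => chebT (S k) u - chebU (S k) u + u * chebU k u) u)
    with (k := k); [ring | | |].
  - simpl. rewrite chebT_1, chebU_1, chebU_0. ring.
  - simpl. rewrite chebT_SS, chebU_SS, chebT_1, chebU_1, chebU_0, chebT_0. ring.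
  - intros j. simpl. rewrite !chebT_SS, !chebU_SS. ring.
Qed.

Lemma chebT_chebU k u : chebT k u - u * chebT (S k) u = (1 - u ^ 2) * chebU k u.
Proof.
  apply Rminus_diag_uniq.
  rewrite <- (three_term_zero (fun k => chebT k u - u * chebT (S k) u - (1 - u ^ 2) * chebU k u) u)
    with (k := k); [ring | | |].
  - simpl. rewrite chebT_1, chebU_0, chebT_0. ring.
  - simpl. rewrite chebT_SS, chebU_1, chebT_1, chebT_0. ring.
  - intros j. simpl. rewrite !chebT_SS, !chebU_SS. ring.
Qed.

Lemma chebT_pell k u : chebT (S k) u ^ 2 + (1 - u ^ 2) * chebU k u ^ 2 = 1.
Proof.
  assert (H : forall j, chebU (S j) u ^ 2 - 2 * u * chebU (S j) u * chebU j u + chebU j u ^ 2 = 1).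
  { induction j as [|j IH]; [rewrite chebU_1, chebU_0; ring|].
    rewrite chebU_SS, <- IH. ring. }
  rewrite chebT_S_chebU. transitivity (chebU (S k) u ^ 2 - 2 * u * chebU (S k) u * chebU k u + chebU k u ^ 2);
    [ring | apply H].
Qed.

Lemma chebT_deriv k u : dpl (chebT k) u (INR k * chebU (pred k) u).
Proof.
  enough (H : forall j, dpl (chebT j) u (INR j * chebU (pred j) u) /\
                        dpl (chebT (S j)) u (INR (S j) * chebU j u)) by apply H.
  induction j as [|j [H1 H2]].
  - split.
    + eapply dpl_eq; [apply (dpl_const 1) | simpl; ring].
    + eapply dpl_eq; [apply dpl_id | simpl; rewrite chebU_0; ring].
  - split; auto.
    apply (dpl_ext (fun t => 2 * t * chebT (S j) t - chebT j t)); [intros; rewrite chebT_SS; auto|].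
    eapply dpl_eq; [apply dpl_minus; [apply dpl_mult; [apply dpl_scal, dpl_id | exact H2] | exact H1]|].
    cbv beta. destruct j as [|j].
    + simpl. rewrite chebT_1, chebU_1, chebU_0. ring.
    + simpl pred. rewrite (chebT_S_chebU (S j) u), (chebU_SS j u), !S_INR. ring.
Qed.

Lemma chebU_deriv k u : exists d, dpl (chebU k) u d /\
  (1 - u ^ 2) * d = u * chebU k u - INR (S k) * chebT (S k) u.
Proof.
  enough (H : forall j,
    (exists d, dpl (chebU j) u d /\ (1 - u ^ 2) * d = u * chebU j u - INR (S j) * chebT (S j) u) /\
    (exists d, dpl (chebU (S j)) u d /\
               (1 - u ^ 2) * d = u * chebU (S j) u - INR (S (S j)) * chebT (S (S j)) u)) by apply H.
  induction j as [|j [[d1 [H1 E1]] [d2 [H2 E2]]]].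
  - split.
    + exists 0. split; [apply (dpl_const 1)|]. rewrite chebU_0, chebT_1. simpl. ring.
    + exists 2. split; [eapply dpl_eq; [apply dpl_scal, dpl_id | ring]|].
      rewrite chebU_1, chebT_SS, chebT_1, chebT_0. simpl. ring.
  - split; [exists d2; auto|].
    exists (2 * chebU (S j) u + 2 * u * d2 - d1). split.
    + apply (dpl_ext (fun t => 2 * t * chebU (S j) t - chebU j t)); [intros; rewrite chebU_SS; auto|].
      eapply dpl_eq; [apply dpl_minus; [apply dpl_mult; [apply dpl_scal, dpl_id | exact H2] | exact H1]|].
      cbv beta. ring.
    + pose proof (chebT_chebU (S (S j)) u) as C. pose proof (chebT_chebU (S j) u) as C'.
      rewrite (chebT_SS (S j)) in C |- *. rewrite chebT_SS in C'.
      rewrite chebU_SS. rewrite !S_INR in *.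
      replace ((1 - u ^ 2) * (2 * chebU (S j) u + 2 * u * d2 - d1)) with
        (2 * (1 - u ^ 2) * chebU (S j) u + 2 * u * ((1 - u ^ 2) * d2) - (1 - u ^ 2) * d1) by ring.
      rewrite E1, E2. rewrite (chebT_SS j) in *. rewrite (chebU_SS j) in C.
      nra.
Qed.

(** * Spherical coordinates *)

Lemma rad_sq x0 x1 x2 : rad x0 x1 x2 ^ 2 = x0 ^ 2 + x1 ^ 2 + x2 ^ 2.
Proof. unfold rad. rewrite pow2_sqrt; [auto | nra]. Qed.

Lemma rho_sq x1 x2 : rho x1 x2 ^ 2 = x1 ^ 2 + x2 ^ 2.
Proof. unfold rho. rewrite pow2_sqrt; [auto | nra]. Qed.

Lemma rad_nonneg x0 x1 x2 : 0 <= rad x0 x1 x2.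
Proof. apply sqrt_pos. Qed.

Lemma rho_nonneg x1 x2 : 0 <= rho x1 x2.
Proof. apply sqrt_pos. Qed.

Lemma rad_pos x0 x1 x2 : 0 < rho x1 x2 -> 0 < rad x0 x1 x2.
Proof. intros H. unfold rad. apply sqrt_lt_R0. pose proof (rho_sq x1 x2). nra. Qed.

Lemma rho_eq_0 x1 x2 : ~ 0 < rho x1 x2 -> x1 = 0 /\ x2 = 0.
Proof.
  intros H. pose proof (rho_nonneg x1 x2). pose proof (rho_sq x1 x2).
  assert (rho x1 x2 = 0) by lra. split; nra.
Qed.

Lemma cos_th1_bounds x0 x1 x2 : 0 < rho x1 x2 -> -1 < cos_th1 x0 x1 x2 < 1.
Proof.
  intros H. unfold cos_th1. pose proof (rad_pos x0 x1 x2 H).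
  pose proof (rad_sq x0 x1 x2). pose proof (rho_sq x1 x2).
  set (r := rad x0 x1 x2) in *.
  assert (-r < x0 < r) by (split; nra).
  assert (x0 / r * r = x0) by (field; lra).
  split; nra.
Qed.

Lemma sin_th1_sq x0 x1 x2 : 0 < rho x1 x2 ->
  1 - cos_th1 x0 x1 x2 ^ 2 = (rho x1 x2 / rad x0 x1 x2) ^ 2.
Proof.
  intros H. unfold cos_th1. pose proof (rad_pos x0 x1 x2 H).
  pose proof (rad_sq x0 x1 x2). pose proof (rho_sq x1 x2).
  replace ((rho x1 x2 / rad x0 x1 x2) ^ 2) with (rho x1 x2 ^ 2 / rad x0 x1 x2 ^ 2) by (field; lra).
  replace (rho x1 x2 ^ 2) with (rad x0 x1 x2 ^ 2 - x0 ^ 2) by lra.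
  field. lra.
Qed.

Lemma cos_sin_th2 x1 x2 : 0 < rho x1 x2 -> cos_th2 x1 x2 ^ 2 + sin_th2 x1 x2 ^ 2 = 1.
Proof.
  intros H. unfold cos_th2, sin_th2. pose proof (rho_sq x1 x2).
  field_simplify; [|lra]. rewrite <- H0. field. lra.
Qed.

Section Paths.

Variables (X0 X1 X2 : R -> R) (t a0 a1 a2 : R).
Hypotheses (D0 : dpl X0 t a0) (D1 : dpl X1 t a1) (D2 : dpl X2 t a2).

Lemma rho_path : 0 < rho (X1 t) (X2 t) ->
  dpl (fun s => rho (X1 s) (X2 s)) t ((X1 t * a1 + X2 t * a2) / rho (X1 t) (X2 t)).
Proof.
  intros Hr. pose proof (rho_sq (X1 t) (X2 t)). unfold rho in *. eapply dpl_eq.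
  - apply dpl_sqrt; [nra|]. apply dpl_plus; apply dpl_pow; eauto.
  - simpl pred. replace (INR 2) with 2 by (simpl; ring). field. lra.
Qed.

Lemma rad_path : 0 < rad (X0 t) (X1 t) (X2 t) ->
  dpl (fun s => rad (X0 s) (X1 s) (X2 s)) t
    ((X0 t * a0 + X1 t * a1 + X2 t * a2) / rad (X0 t) (X1 t) (X2 t)).
Proof.
  intros Hr. pose proof (rad_sq (X0 t) (X1 t) (X2 t)). unfold rad in *. eapply dpl_eq.
  - apply dpl_sqrt; [nra|]. apply dpl_plus; [apply dpl_plus|]; apply dpl_pow; eauto.
  - simpl pred. replace (INR 2) with 2 by (simpl; ring). field. lra.
Qed.

Lemma cos_th1_path : 0 < rad (X0 t) (X1 t) (X2 t) ->
  let r := rad (X0 t) (X1 t) (X2 t) in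
  dpl (fun s => cos_th1 (X0 s) (X1 s) (X2 s)) t
    ((a0 * r - X0 t * ((X0 t * a0 + X1 t * a1 + X2 t * a2) / r)) / r ^ 2).
Proof. intros Hr r. apply dpl_div; [unfold r in Hr; lra | exact D0 | exact (rad_path Hr)]. Qed.

(* With the angular velocity [w = (x1 a2 - x2 a1) / rho^2], the point
   [(cos th2, sin th2)] moves as [(- sin th2 * w, cos th2 * w)]. *)
Lemma cos_th2_path : 0 < rho (X1 t) (X2 t) ->
  dpl (fun s => cos_th2 (X1 s) (X2 s)) t
    (- sin_th2 (X1 t) (X2 t) * ((- X2 t * a1 + X1 t * a2) / rho (X1 t) (X2 t) ^ 2)).
Proof.
  intros Hr. pose proof (rho_sq (X1 t) (X2 t)) as Hs.
  eapply dpl_eq; [apply dpl_div; [lra | exact D1 | exact (rho_path Hr)]|].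
  unfold sin_th2. set (rh := rho (X1 t) (X2 t)) in *.
  apply (Rmult_eq_reg_l (rh ^ 3)); [|apply pow_nonzero; lra].
  field_simplify; [|lra|lra]. rewrite Hs. ring.
Qed.

Lemma sin_th2_path : 0 < rho (X1 t) (X2 t) ->
  dpl (fun s => sin_th2 (X1 s) (X2 s)) t
    (cos_th2 (X1 t) (X2 t) * ((- X2 t * a1 + X1 t * a2) / rho (X1 t) (X2 t) ^ 2)).
Proof.
  intros Hr. pose proof (rho_sq (X1 t) (X2 t)) as Hs.
  eapply dpl_eq; [apply dpl_div; [lra | exact D2 | exact (rho_path Hr)]|].
  unfold cos_th2. set (rh := rho (X1 t) (X2 t)) in *.
  apply (Rmult_eq_reg_l (rh ^ 3)); [|apply pow_nonzero; lra].
  field_simplify; [|lra|lra]. rewrite Hs. ring.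
Qed.

End Paths.

(* Abstracts [T_l(cos th2)] and [sin th2 U_(l-1)(cos th2)]; [g] is the derivative of
   [A] with respect to [th2]. *)
Definition angular_factor (l : nat) (A : R -> R -> R) : Prop :=
  forall x1 x2, 0 < rho x1 x2 -> exists g,
    A x1 x2 ^ 2 <= 1 /\ g ^ 2 = INR l ^ 2 * (1 - A x1 x2 ^ 2) /\
    forall X1 X2 t a1 a2, X1 t = x1 -> X2 t = x2 -> dpl X1 t a1 -> dpl X2 t a2 ->
      dpl (fun s => A (X1 s) (X2 s)) t ((- x2 * a1 + x1 * a2) / rho x1 x2 ^ 2 * g).

Lemma chebT_angular l : angular_factor l (fun x1 x2 => chebT l (cos_th2 x1 x2)).
Proof.
  intros x1 x2 Hr.
  set (u := cos_th2 x1 x2). set (v := sin_th2 x1 x2).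
  assert (Huv : u ^ 2 + v ^ 2 = 1) by apply (cos_sin_th2 x1 x2 Hr).
  exists (- INR l * chebU (pred l) u * v). split; [|split].
  - destruct l as [|k]; [rewrite chebT_0; lra|].
    pose proof (chebT_pell k u). pose proof (pow2_ge_0 (chebU k u)). nra.
  - destruct l as [|k]; [simpl; ring|].
    pose proof (chebT_pell k u) as Hp. simpl pred.
    replace (chebT (S k) u ^ 2) with (1 - (1 - u ^ 2) * chebU k u ^ 2) by lra.
    replace (1 - u ^ 2) with (v ^ 2) by lra. ring.
  - intros X1 X2 t a1 a2 E1 E2 H1 H2. subst x1 x2.
    eapply dpl_eq.
    + apply (dpl_comp (chebT l) (fun s => cos_th2 (X1 s) (X2 s))).
      * apply (cos_th2_path X1 X2 t a1 a2 H1 H2 Hr).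
      * apply chebT_deriv.
    + fold u v. ring.
Qed.

Lemma chebU_angular k :
  angular_factor (S k) (fun x1 x2 => sin_th2 x1 x2 * chebU k (cos_th2 x1 x2)).
Proof.
  intros x1 x2 Hr.
  set (u := cos_th2 x1 x2). set (v := sin_th2 x1 x2).
  assert (Huv : u ^ 2 + v ^ 2 = 1) by apply (cos_sin_th2 x1 x2 Hr).
  pose proof (chebT_pell k u) as Hp.
  assert (HA : (v * chebU k u) ^ 2 = 1 - chebT (S k) u ^ 2).
  { replace ((v * chebU k u) ^ 2) with (v ^ 2 * chebU k u ^ 2) by ring.
    replace (v ^ 2) with (1 - u ^ 2) by lra. lra. }
  exists (INR (S k) * chebT (S k) u). split; [|split].
  - rewrite HA. pose proof (pow2_ge_0 (chebT (S k) u)). lra.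
  - rewrite HA. ring.
  - intros X1 X2 t a1 a2 E1 E2 H1 H2. subst x1 x2.
    destruct (chebU_deriv k u) as [d [Hd Ed]].
    eapply dpl_eq.
    + apply dpl_mult; [apply (sin_th2_path X1 X2 t a1 a2 H1 H2 Hr)|].
      apply (dpl_comp (chebU k) (fun s => cos_th2 (X1 s) (X2 s))).
      * apply (cos_th2_path X1 X2 t a1 a2 H1 H2 Hr).
      * exact Hd.
    + fold u v. replace (INR (S k) * chebT (S k) u) with (u * chebU k u - (1 - u ^ 2) * d)
        by (rewrite Ed; ring).
      replace (1 - u ^ 2) with (v ^ 2) by lra. change (sin_th2 (X1 t) (X2 t)) with v. change (cos_th2 (X1 t) (X2 t)) with u. ring.
Qed.

(** * Solid harmonics off the axis *)

Definition solid (N l : nat) (A : R -> R -> R) (x0 x1 x2 : R) : R :=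
  rad x0 x1 x2 ^ N * assocLegendre N l (cos_th1 x0 x1 x2) * A x1 x2.

Lemma solidU_solid N l x0 x1 x2 :
  solidU N l x0 x1 x2 = solid N l (fun x1 x2 => chebT l (cos_th2 x1 x2)) x0 x1 x2.
Proof. unfold solidU, Usph, solid. ring. Qed.

Lemma solidV_solid N k x0 x1 x2 :
  solidV N (S k) x0 x1 x2
  = solid N (S k) (fun x1 x2 => sin_th2 x1 x2 * chebU k (cos_th2 x1 x2)) x0 x1 x2.
Proof. unfold solidV, Vsph, solid. rewrite Nat.sub_succ, Nat.sub_0_r. ring. Qed.

Definition grad_bound (N l : nat) (r : R) : R :=
  INR N * sqrt (INR (fact (N + l)) / INR (fact (N - l))) * r ^ pred N.

(* The derivative of [r^N P(cos th1) A] in direction [a], where [rn = r^(N-1)], [P] and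
   [P'] are the values of [P_N^l] and its derivative, [H] that of [A] and [g] that of
   its [th2]-derivative. *)
Definition polar_dir_deriv (n r rn rh x0 x1 x2 P P' H g a0 a1 a2 : R) : R :=
  (n * rn * ((x0 * a0 + x1 * a1 + x2 * a2) / r) * P
    + (r * rn) * (P' * ((a0 * r - x0 * ((x0 * a0 + x1 * a1 + x2 * a2) / r)) / r ^ 2))) * H
  + (r * rn) * P * ((- x2 * a1 + x1 * a2) / rh ^ 2 * g).

Lemma polar_grad_norm_sq n r rn rh x0 x1 x2 P P' H g :
  0 < r -> 0 < rh -> r ^ 2 = x0 ^ 2 + x1 ^ 2 + x2 ^ 2 -> rh ^ 2 = x1 ^ 2 + x2 ^ 2 ->
  let D := polar_dir_deriv n r rn rh x0 x1 x2 P P' H g in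
  D 1 0 0 ^ 2 + D 0 1 0 ^ 2 + D 0 0 1 ^ 2
  = rn ^ 2 * (H ^ 2 * (n ^ 2 * P ^ 2 + (rh / r) ^ 2 * P' ^ 2) + r ^ 2 * P ^ 2 * g ^ 2 / rh ^ 2).
Proof.
  intros Hr Hrh Er Erh D.
  (* the gradient is [H (al e0 + be x) + ga (0, -x2, x1)] *)
  set (al := rn * P').
  set (be := rn * (n * P - x0 / r * P') / r).
  set (ga := r * rn * P * g / rh ^ 2).
  assert (E0 : D 1 0 0 = H * (al + be * x0)) by (unfold D, polar_dir_deriv, al, be; field; lra).
  assert (E1 : D 0 1 0 = H * be * x1 - ga * x2) by (unfold D, polar_dir_deriv, be, ga; field; lra).
  assert (E2 : D 0 0 1 = H * be * x2 + ga * x1) by (unfold D, polar_dir_deriv, be, ga; field; lra).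
  rewrite E0, E1, E2.
  transitivity (H ^ 2 * (al ^ 2 + 2 * al * be * x0 + be ^ 2 * r ^ 2) + ga ^ 2 * rh ^ 2);
    [rewrite Er, Erh; ring|].
  unfold al, be, ga.
  replace ((rh / r) ^ 2) with (rh ^ 2 / r ^ 2) by (field; lra).
  replace (rh ^ 2) with (r ^ 2 - x0 ^ 2) by lra.
  field. split; [|lra]. nra.
Qed.

Lemma solid_path_deriv N l A g X0 X1 X2 t a0 a1 a2 : (1 <= N)%nat ->
  0 < rho (X1 t) (X2 t) -> dpl X0 t a0 -> dpl X1 t a1 -> dpl X2 t a2 ->
  dpl (fun s => A (X1 s) (X2 s)) t ((- X2 t * a1 + X1 t * a2) / rho (X1 t) (X2 t) ^ 2 * g) ->
  let r := rad (X0 t) (X1 t) (X2 t) in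
  let c := cos_th1 (X0 t) (X1 t) (X2 t) in
  dpl (fun s => solid N l A (X0 s) (X1 s) (X2 s)) t
    (polar_dir_deriv (INR N) r (r ^ pred N) (rho (X1 t) (X2 t)) (X0 t) (X1 t) (X2 t)
       (assocLegendre N l c) (assocLegendreD N l c) (A (X1 t) (X2 t)) g a0 a1 a2).
Proof.
  intros HN Hrh H0 H1 H2 HA r c.
  pose proof (rad_pos (X0 t) (X1 t) (X2 t) Hrh) as Hr.
  pose proof (rad_path X0 X1 X2 t a0 a1 a2 H0 H1 H2 Hr) as Hrad.
  pose proof (dpl_comp (assocLegendre N l) (fun s => cos_th1 (X0 s) (X1 s) (X2 s)) t _ _
    (cos_th1_path X0 X1 X2 t a0 a1 a2 H0 H1 H2 Hr)
    (assocLegendre_deriv N l _ (cos_th1_bounds _ _ _ Hrh))) as Hleg.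
  unfold solid. eapply dpl_eq.
  - apply dpl_mult; [apply dpl_mult; [apply dpl_pow, Hrad | exact Hleg] | exact HA].
  - unfold r, c, polar_dir_deriv.
    destruct N as [|N]; [lia|]. simpl pred. simpl pow. ring.
Qed.

Lemma grad_bound_sq N l r :
  grad_bound N l r ^ 2 = INR N ^ 2 * (INR (fact (N + l)) / INR (fact (N - l))) * (r ^ pred N) ^ 2.
Proof.
  unfold grad_bound. rewrite !Rpow_mult_distr, pow2_sqrt; [ring|].
  apply Rlt_le, Rdiv_lt_0_compat; apply INR_fact_pos.
Qed.

Lemma solid_grad_off_axis N l A x0 x1 x2 : (1 <= N)%nat -> (l <= N)%nat ->
  angular_factor l A -> 0 < rho x1 x2 ->
  exists d0 d1 d2,
    dpl (fun t => solid N l A t x1 x2) x0 d0 /\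
    dpl (fun t => solid N l A x0 t x2) x1 d1 /\
    dpl (fun t => solid N l A x0 x1 t) x2 d2 /\
    d0 ^ 2 + d1 ^ 2 + d2 ^ 2 <= grad_bound N l (rad x0 x1 x2) ^ 2.
Proof.
  intros HN Hl HA Hrh.
  destruct (HA x1 x2 Hrh) as [g [HH [Hg Hpath]]].
  set (r := rad x0 x1 x2). set (c := cos_th1 x0 x1 x2).
  set (D := polar_dir_deriv (INR N) r (r ^ pred N) (rho x1 x2) x0 x1 x2
              (assocLegendre N l c) (assocLegendreD N l c) (A x1 x2) g).
  exists (D 1 0 0), (D 0 1 0), (D 0 0 1). split; [|split; [|split]].
  - apply (solid_path_deriv N l A g (fun s => s) (fun _ => x1) (fun _ => x2)); try apply Hpath; auto using dpl_id, dpl_const.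
  - apply (solid_path_deriv N l A g (fun _ => x0) (fun s => s) (fun _ => x2)); try apply Hpath; auto using dpl_id, dpl_const.
  - apply (solid_path_deriv N l A g (fun _ => x0) (fun _ => x1) (fun s => s)); try apply Hpath; auto using dpl_id, dpl_const.
  - pose proof (rad_pos x0 x1 x2 Hrh) as Hr. fold r in Hr.
    pose proof (cos_th1_bounds x0 x1 x2 Hrh) as Hc. fold c in Hc.
    pose proof (sin_th1_sq x0 x1 x2 Hrh) as Hs. fold r c in Hs.
    unfold D. rewrite polar_grad_norm_sq; [| exact Hr | exact Hrh | apply rad_sq | apply rho_sq].
    rewrite grad_bound_sq. fold r. rewrite <- Hs.
    destruct (assocLegendre_bound N l c HN Hl Hc) as [B1 B2].
    set (M := INR (fact (N + l)) / INR (fact (N - l))) in *.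
    set (P := assocLegendre N l c) in *. set (H := A x1 x2) in *.
    replace (r ^ 2 * P ^ 2 * g ^ 2 / rho x1 x2 ^ 2)
      with ((1 - H ^ 2) * (INR l ^ 2 * P ^ 2 / (1 - c ^ 2))).
    2:{ rewrite Hg, Hs. field. split; lra. }
    assert (H ^ 2 * (INR N ^ 2 * P ^ 2 + (1 - c ^ 2) * assocLegendreD N l c ^ 2)
              + (1 - H ^ 2) * (INR l ^ 2 * P ^ 2 / (1 - c ^ 2)) <= INR N ^ 2 * M).
    { pose proof (pow2_ge_0 H).
      apply Rle_trans with (H ^ 2 * (INR N ^ 2 * M) + (1 - H ^ 2) * (INR N ^ 2 * M)); [|lra].
      apply Rplus_le_compat; apply Rmult_le_compat_l; lra. }
    rewrite (Rmult_comm (INR N ^ 2 * M)).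
    apply Rmult_le_compat_l; [apply pow2_ge_0 | assumption].
Qed.

(** * The axis *)

(* A derivative at [0] is bounded by [K 0] as soon as nearby derivatives are bounded by a
   function [K] continuous at [0]: by the mean value theorem the difference quotients are
   values of nearby derivatives. *)
Lemma dpl_bound_of_nearby (g K : R -> R) d :
  dpl g 0 d -> continuity_pt K 0 ->
  (forall t, t <> 0 -> exists e, dpl g t e /\ Rabs e <= K t) ->
  Rabs d <= K 0.
Proof.
  intros Hd HK Hg.
  destruct (Rle_dec (Rabs d) (K 0)) as [ok|nok]; auto. exfalso.
  set (eps := (Rabs d - K 0) / 2).
  assert (Heps : 0 < eps) by (unfold eps; lra).
  destruct (HK eps Heps) as [d1 [Hd1 HK1]].
  destruct (Hd eps Heps) as [d2 Hd2].
  set (h := Rmin d1 d2 / 2).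
  assert (Hh : 0 < h /\ h < d1 /\ h < d2).
  { pose proof (cond_pos d2). unfold h, Rmin. destruct (Rle_dec d1 d2); lra. }
  set (g' := fun c => match Req_EM_T c 0 with
                      | left _ => d
                      | right Hc => proj1_sig (constructive_indefinite_description _ (Hg c Hc))
                      end).
  assert (Hg' : forall c, c <> 0 -> dpl g c (g' c) /\ Rabs (g' c) <= K c).
  { intros c Hc. unfold g'. destruct (Req_EM_T c 0) as [E|E]; [contradiction|].
    exact (proj2_sig (constructive_indefinite_description _ (Hg c E))). }
  assert (Hdiff : forall c, 0 <= c <= h -> dpl g c (g' c)).
  { intros c _. destruct (Req_dec c 0) as [->|E]; [|apply Hg'; auto].
    unfold g'. destruct (Req_EM_T 0 0); [exact Hd | contradiction]. }
  destruct (MVT_cor2 g g' 0 h (proj1 Hh) Hdiff) as [c [Ec Hc]].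
  assert (Hgc : Rabs (g' c) < K 0 + eps).
  { destruct (Hg' c ltac:(lra)) as [_ Hb].
    assert (Rabs (K c - K 0) < eps).
    { destruct (Req_dec c 0); [lra|].
      apply (HK1 c). split; [split; [exact I | auto] |].
      simpl. unfold R_dist. rewrite Rminus_0_r, Rabs_pos_eq; lra. }
    apply Rabs_def2 in H. lra. }
  assert (Hq : Rabs ((g (0 + h) - g 0) / h - d) < eps).
  { apply Hd2; [lra | rewrite Rabs_pos_eq; lra]. }
  rewrite Rplus_0_l, Ec in Hq. replace (g' c * (h - 0) / h) with (g' c) in Hq by (field; lra).
  pose proof (Rabs_triang (g' c) (d - g' c)). replace (g' c + (d - g' c)) with d in H by ring.
  rewrite Rabs_minus_sym in H. unfold eps in *. lra.
Qed.

Lemma grad_bound_nonneg N l r : 0 <= r -> 0 <= grad_bound N l r.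
Proof.
  intros. unfold grad_bound.
  apply Rmult_le_pos; [apply Rmult_le_pos|]; [apply pos_INR | apply sqrt_pos | apply pow_le; auto].
Qed.

Lemma abs_le_of_sq_le e K : 0 <= K -> e ^ 2 <= K ^ 2 -> Rabs e <= K.
Proof.
  intros HK H. apply Rsqr_incr_0_var; auto.
  rewrite <- Rsqr_abs. unfold Rsqr. simpl in H. lra.
Qed.

Lemma rad_axis t : rad t 0 0 = Rabs t.
Proof.
  unfold rad. rewrite <- sqrt_Rsqr_abs. unfold Rsqr. f_equal. ring.
Qed.

Lemma grad_bound_rad_continuous N l x0 :
  continuity_pt (fun s => grad_bound N l (sqrt (x0 ^ 2 + s ^ 2))) 0.
Proof.
  unfold grad_bound. apply continuity_pt_mult; [apply continuity_pt_const; intros ? ?; reflexivity|].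
  apply (continuity_pt_comp (fun s => sqrt (x0 ^ 2 + s ^ 2)) (fun y => y ^ pred N)).
  - apply (continuity_pt_comp (fun s => x0 ^ 2 + s ^ 2) sqrt).
    + apply derivable_continuous_pt. exists (0 + INR 2 * 0 ^ pred 2 * 1).
      apply dpl_plus; [apply dpl_const | apply dpl_pow, dpl_id].
    + apply continuity_pt_sqrt. nra.
  - apply derivable_continuous_pt. eexists. apply derivable_pt_lim_pow.
Qed.

Lemma rad_x0_x1 x0 s : rad x0 s 0 = sqrt (x0 ^ 2 + s ^ 2).
Proof. unfold rad. f_equal. ring. Qed.

Lemma rad_x0_x2 x0 s : rad x0 0 s = sqrt (x0 ^ 2 + s ^ 2).
Proof. unfold rad. f_equal. ring. Qed.

Lemma rho_pos x1 x2 : x1 <> 0 \/ x2 <> 0 -> 0 < rho x1 x2.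
Proof. intros H. apply sqrt_lt_R0. destruct H; nra. Qed.

(* On the [x0]-axis the partial derivatives are limits of nearby ones, which obey the
   off-axis bound. *)
Lemma solid_axis_partial_x1 N l A x0 d : (1 <= N)%nat -> (l <= N)%nat -> angular_factor l A ->
  dpl (fun s => solid N l A x0 s 0) 0 d -> Rabs d <= grad_bound N l (rad x0 0 0).
Proof.
  intros HN Hl HA Hd. rewrite rad_x0_x1.
  apply (dpl_bound_of_nearby _ _ d Hd (grad_bound_rad_continuous N l x0)).
  intros t Ht. destruct (solid_grad_off_axis N l A x0 t 0 HN Hl HA (rho_pos t 0 (or_introl Ht)))
    as (d0 & d1 & d2 & _ & D1 & _ & B).
  exists d1. split; [exact D1|]. rewrite <- rad_x0_x1.
  apply abs_le_of_sq_le; [apply grad_bound_nonneg, rad_nonneg|].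
  pose proof (pow2_ge_0 d0). pose proof (pow2_ge_0 d2). lra.
Qed.

Lemma solid_axis_partial_x2 N l A x0 d : (1 <= N)%nat -> (l <= N)%nat -> angular_factor l A ->
  dpl (fun s => solid N l A x0 0 s) 0 d -> Rabs d <= grad_bound N l (rad x0 0 0).
Proof.
  intros HN Hl HA Hd. rewrite rad_x0_x2.
  apply (dpl_bound_of_nearby _ _ d Hd (grad_bound_rad_continuous N l x0)).
  intros t Ht. destruct (solid_grad_off_axis N l A x0 0 t HN Hl HA (rho_pos 0 t (or_intror Ht)))
    as (d0 & d1 & d2 & _ & _ & D2 & B).
  exists d2. split; [exact D2|]. rewrite <- rad_x0_x2.
  apply abs_le_of_sq_le; [apply grad_bound_nonneg, rad_nonneg|].
  pose proof (pow2_ge_0 d0). pose proof (pow2_ge_0 d1). lra.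
Qed.

Lemma radial_assocLegendre_axis N l t : (1 <= N)%nat -> (1 <= l)%nat ->
  rad t 0 0 ^ N * assocLegendre N l (cos_th1 t 0 0) = 0.
Proof.
  intros HN Hl. rewrite rad_axis. destruct (Req_dec t 0) as [->|E].
  - rewrite Rabs_R0, pow_i by lia. ring.
  - unfold assocLegendre, cos_th1. rewrite rad_axis.
    replace (1 - (t / Rabs t) ^ 2) with 0.
    + rewrite sqrt_0, pow_i by lia. ring.
    + assert (Rabs t <> 0) by (apply Rabs_no_R0; auto).
      replace ((t / Rabs t) ^ 2) with (t ^ 2 / Rabs t ^ 2) by (field; auto).
      rewrite pow2_abs. field. intro Z. apply E. nra.
Qed.

Lemma solid_axis N l A t : (1 <= N)%nat -> (1 <= l)%nat -> solid N l A t 0 0 = 0.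
Proof. intros. unfold solid. rewrite radial_assocLegendre_axis; auto. ring. Qed.

Lemma solidU_0_axis N t : solidU N 0 t 0 0 = t ^ N.
Proof.
  unfold solidU, Usph, assocLegendre, cos_th1. rewrite chebT_0, rad_axis.
  destruct (legendre_at_pm1 N) as [P1 Pm1]. unfold legendreD in P1, Pm1. simpl Nat.iter in *.
  simpl pow. destruct (Rtotal_order t 0) as [L|[->|G]].
  - rewrite Rabs_left by auto. replace (t / - t) with (-1) by (field; lra). rewrite Pm1.
    replace (- t) with (-1 * t) by ring. rewrite Rpow_mult_distr.
    assert (Hsq : (-1) ^ N * (-1) ^ N = 1).
    { rewrite <- Rpow_mult_distr. replace (-1 * -1) with 1 by ring. apply pow1. }
    transitivity ((-1) ^ N * (-1) ^ N * t ^ N); [ring | rewrite Hsq; ring].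
  - rewrite Rabs_R0. unfold Rdiv. rewrite Rinv_0. destruct N as [|N]; [unfold legendre|]; simpl; ring.
  - rewrite Rabs_right by lra. replace (t / t) with 1 by (field; lra). rewrite P1. ring.
Qed.

Lemma solidU_even_x2 N l x0 x1 t : solidU N l x0 x1 (- t) = solidU N l x0 x1 t.
Proof. unfold solidU, Usph, cos_th1, cos_th2, rad, rho. now replace ((- t) ^ 2) with (t ^ 2) by ring. Qed.

Lemma solidU_0_even_x1 N x0 t x2 : solidU N 0 x0 (- t) x2 = solidU N 0 x0 t x2.
Proof. unfold solidU, Usph, cos_th1, rad. rewrite !chebT_0. now replace ((- t) ^ 2) with (t ^ 2) by ring. Qed.

Lemma solidV_x2_0 N m x0 t : solidV N m x0 t 0 = 0.
Proof. unfold solidV, Vsph, sin_th2, Rdiv. ring. Qed.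

Lemma sum_sq_le_of_abs_le d0 d1 d2 K : 0 <= K -> d0 = 0 -> Rabs d1 <= K -> d2 = 0 ->
  d0 ^ 2 + d1 ^ 2 + d2 ^ 2 <= K ^ 2.
Proof.
  intros HK -> Hd ->. rewrite <- (pow2_abs d1). pose proof (Rabs_pos d1). nra.
Qed.

Lemma solidU_grad_bound N l x0 x1 x2 d0 d1 d2 : (1 <= N)%nat -> (l <= N)%nat ->
  dpl (fun t => solidU N l t x1 x2) x0 d0 ->
  dpl (fun t => solidU N l x0 t x2) x1 d1 ->
  dpl (fun t => solidU N l x0 x1 t) x2 d2 ->
  d0 ^ 2 + d1 ^ 2 + d2 ^ 2 <= grad_bound N l (rad x0 x1 x2) ^ 2.
Proof.
  intros HN Hl D0 D1 D2.
  set (A := fun x1 x2 => chebT l (cos_th2 x1 x2)).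
  destruct (Rlt_dec 0 (rho x1 x2)) as [Hr|Hr].
  - destruct (solid_grad_off_axis N l A x0 x1 x2 HN Hl (chebT_angular l) Hr)
      as (e0 & e1 & e2 & E0 & E1 & E2 & B).
    rewrite (uniqueness_limite _ _ _ _ D0 (dpl_ext _ _ _ _ (fun t => eq_sym (solidU_solid N l _ _ _)) E0)),
      (uniqueness_limite _ _ _ _ D1 (dpl_ext _ _ _ _ (fun t => eq_sym (solidU_solid N l _ _ _)) E1)),
      (uniqueness_limite _ _ _ _ D2 (dpl_ext _ _ _ _ (fun t => eq_sym (solidU_solid N l _ _ _)) E2)).
    exact B.
  - destruct (rho_eq_0 x1 x2 Hr) as [-> ->].
    assert (Hd2 : d2 = 0) by (apply (dpl_even_at_0 (fun t => solidU N l x0 0 t)); auto using solidU_even_x2).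
    destruct l as [|k].
    + assert (Hd1 : d1 = 0) by (apply (dpl_even_at_0 (fun t => solidU N 0 x0 t 0)); auto using solidU_0_even_x1).
      assert (Hd0 : d0 = INR N * x0 ^ pred N).
      { apply (uniqueness_limite (fun t => solidU N 0 t 0 0) x0); auto.
        apply (dpl_ext (fun t => t ^ N)); [intros; symmetry; apply solidU_0_axis|].
        eapply dpl_eq; [apply dpl_pow, dpl_id | cbv beta; ring]. }
      subst. unfold grad_bound. rewrite rad_axis, Nat.add_0_r, Nat.sub_0_r.
      replace (INR (fact N) / INR (fact N)) with 1 by (pose proof (INR_fact_pos N); field; lra).
      rewrite sqrt_1, RPow_abs, !Rpow_mult_distr, pow2_abs. ring_simplify. lra.
    + apply sum_sq_le_of_abs_le; auto using grad_bound_nonneg, rad_nonneg.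
      * apply (dpl_zero_fun (fun t => solidU N (S k) t 0 0) x0); auto.
        intros t. rewrite solidU_solid. apply solid_axis; lia.
      * apply (solid_axis_partial_x1 N (S k) A x0 d1 HN Hl (chebT_angular (S k))).
        apply (dpl_ext (fun t => solidU N (S k) x0 t 0)); [intros; apply solidU_solid | exact D1].
Qed.

Lemma solidV_grad_bound N m x0 x1 x2 d0 d1 d2 : (1 <= N)%nat -> (1 <= m <= N)%nat ->
  dpl (fun t => solidV N m t x1 x2) x0 d0 ->
  dpl (fun t => solidV N m x0 t x2) x1 d1 ->
  dpl (fun t => solidV N m x0 x1 t) x2 d2 ->
  d0 ^ 2 + d1 ^ 2 + d2 ^ 2 <= grad_bound N m (rad x0 x1 x2) ^ 2.
Proof.
  intros HN Hm D0 D1 D2. destruct m as [|k]; [lia|].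
  set (A := fun x1 x2 => sin_th2 x1 x2 * chebU k (cos_th2 x1 x2)).
  assert (Hk : (S k <= N)%nat) by lia.
  destruct (Rlt_dec 0 (rho x1 x2)) as [Hr|Hr].
  - destruct (solid_grad_off_axis N (S k) A x0 x1 x2 HN Hk (chebU_angular k) Hr)
      as (e0 & e1 & e2 & E0 & E1 & E2 & B).
    rewrite (uniqueness_limite _ _ _ _ D0 (dpl_ext _ _ _ _ (fun t => eq_sym (solidV_solid N k _ _ _)) E0)),
      (uniqueness_limite _ _ _ _ D1 (dpl_ext _ _ _ _ (fun t => eq_sym (solidV_solid N k _ _ _)) E1)),
      (uniqueness_limite _ _ _ _ D2 (dpl_ext _ _ _ _ (fun t => eq_sym (solidV_solid N k _ _ _)) E2)).
    exact B.
  - destruct (rho_eq_0 x1 x2 Hr) as [-> ->].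
    replace (d0 ^ 2 + d1 ^ 2 + d2 ^ 2) with (d1 ^ 2 + d2 ^ 2 + d0 ^ 2) by ring.
    apply sum_sq_le_of_abs_le; auto using grad_bound_nonneg, rad_nonneg.
    + apply (dpl_zero_fun (fun t => solidV N (S k) x0 t 0) 0); auto using solidV_x2_0.
    + apply (solid_axis_partial_x2 N (S k) A x0 d2 HN Hk (chebU_angular k)).
      apply (dpl_ext (fun t => solidV N (S k) x0 0 t)); [intros; apply solidV_solid | exact D2].
    + apply (dpl_zero_fun (fun t => solidV N (S k) t 0 0) x0); auto.
      intros t. rewrite solidV_solid. apply solid_axis; lia.
Qed.

Lemma qnorm_half_Dbar d0 d1 d2 :
  qnorm (qscale (/ 2) (Dbar_val d0 d1 d2)) = / 2 * sqrt (d0 ^ 2 + d1 ^ 2 + d2 ^ 2).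
Proof.
  unfold qnorm, qscale, Dbar_val.
  replace ((/ 2 * d0) ^ 2 + (/ 2 * - d1) ^ 2 + (/ 2 * - d2) ^ 2 + (/ 2 * 0) ^ 2)
    with ((/ 2) ^ 2 * (d0 ^ 2 + d1 ^ 2 + d2 ^ 2)) by ring.
  rewrite sqrt_mult, sqrt_pow2; try lra; nra.
Qed.

Lemma qnorm_half_Dbar_le d0 d1 d2 K : 0 <= K -> d0 ^ 2 + d1 ^ 2 + d2 ^ 2 <= K ^ 2 ->
  qnorm (qscale (/ 2) (Dbar_val d0 d1 d2)) <= / 2 * K.
Proof.
  intros HK H. rewrite qnorm_half_Dbar. apply Rmult_le_compat_l; [lra|].
  rewrite <- (sqrt_pow2 K HK). apply sqrt_le_1_alt, H.
Qed.

Theorem proposition3 :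
  forall (n : nat) (x0 x1 x2 : R),
    (forall l : nat, (l <= n + 1)%nat ->
       forall d0 d1 d2 : R,
         derivable_pt_lim (fun t => solidU (n + 1) l t x1 x2) x0 d0 ->
         derivable_pt_lim (fun t => solidU (n + 1) l x0 t x2) x1 d1 ->
         derivable_pt_lim (fun t => solidU (n + 1) l x0 x1 t) x2 d2 ->
         qnorm (qscale (/ 2) (Dbar_val d0 d1 d2))
           <= / 2 * INR (n + 1)
              * sqrt (INR (fact (n + 1 + l)) / INR (fact (n + 1 - l)))
              * rad x0 x1 x2 ^ n)
    /\
    (forall m : nat, (1 <= m)%nat -> (m <= n + 1)%nat ->
       forall d0 d1 d2 : R,
         derivable_pt_lim (fun t => solidV (n + 1) m t x1 x2) x0 d0 ->
         derivable_pt_lim (fun t => solidV (n + 1) m x0 t x2) x1 d1 ->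
         derivable_pt_lim (fun t => solidV (n + 1) m x0 x1 t) x2 d2 ->
         qnorm (qscale (/ 2) (Dbar_val d0 d1 d2))
           <= / 2 * INR (n + 1)
              * sqrt (INR (fact (n + 1 + m)) / INR (fact (n + 1 - m)))
              * rad x0 x1 x2 ^ n).
Proof.
  intros n x0 x1 x2.
  assert (Hpred : pred (n + 1) = n) by lia.
  assert (HN : (1 <= n + 1)%nat) by lia.
  split.
  - intros l Hl d0 d1 d2 D0 D1 D2.
    pose proof (solidU_grad_bound _ _ _ _ _ _ _ _ HN Hl D0 D1 D2) as B.
    eapply Rle_trans; [apply (qnorm_half_Dbar_le _ _ _ _ (grad_bound_nonneg _ _ _ (rad_nonneg _ _ _)) B)|].
    unfold grad_bound. rewrite Hpred. right. ring.
  - intros m Hm1 Hm d0 d1 d2 D0 D1 D2.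
    pose proof (solidV_grad_bound _ _ _ _ _ _ _ _ HN (conj Hm1 Hm) D0 D1 D2) as B.
    eapply Rle_trans; [apply (qnorm_half_Dbar_le _ _ _ _ (grad_bound_nonneg _ _ _ (rad_nonneg _ _ _)) B)|].
    unfold grad_bound. rewrite Hpred. right. ring.
Qed.
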